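(* (i) Let $Y\subseteq X$ be metric spaces (with the restricted metric) and $x\in Y$. Then $\underline{\delta}_Y(x)\le\underline{\delta}_X(x)$ and $\overline{\delta}_Y(x)\le\overline{\delta}_X(x)$, with equalities if there is $R_0>0$ such that $B_X(x,R_0)\subseteq Y$. (ii) Let $X_1,X_2\subseteq X$ and $x\in X_1\cap X_2$. Then $\underline{\delta}_{X_1\cup X_2}(x)\ge\max\{\underline{\delta}_{X_1}(x),\underline{\delta}_{X_2}(x)\}$ and $\overline{\delta}_{X_1\cup X_2}(x)=\max\{\overline{\delta}_{X_1}(x),\overline{\delta}_{X_2}(x)\}$. (iii) Let $X,Y$ be metric spaces, $x\in X$, $y\in Y$, and endow $X\times Y$ with the product metric. Then $\underline{\delta}_{X\times Y}((x,y))\ge\underline{\delta}_X(x)+\underline{\delta}_Y(y)$ and $\overline{\delta}_{X\times Y}((x,y))\le\overline{\delta}_X(x)+\overline{\delta}_Y(y)$.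
   Context: For a metric space $Z$ and $z\in Z$, with $B_Z(z,r)$ the open ball, $\overline{B}(z,r)$ the closed ball and $n(r,A)$ the minimum number of open balls of radius $r$ needed to cover $A$, the lower and upper tangential dimensions are $\underline{\delta}_Z(z)=\liminf_{\lambda\to0}\liminf_{r\to0}\frac{\log n(\lambda r,\overline{B}(z,r))}{\log1/\lambda}$, $\overline{\delta}_Z(z)=\limsup_{\lambda\to0}\limsup_{r\to0}\frac{\log n(\lambda r,\overline{B}(z,r))}{\log1/\lambda}$ (possibly infinite); for a subset $E$ of a metric space, $\underline{\delta}_E$, $\overline{\delta}_E$ are computed in $E$ with the restricted metric. *)

From HB Require Import structures.
From mathcomp Require Import all_boot all_order all_algebra.
From mathcomp Require Import all_classical all_reals all_analysis.
Set Implicit Arguments. Unset Strict Implicit. Unset Printing Implicit Defensive.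
Import Order.TTheory GRing.Theory Num.Theory.
Local Open Scope classical_set_scope.
Local Open Scope ring_scope.

Definition is_metric (R : realType) (T : Type) (d : T -> T -> R) : Prop :=
  (forall x y, 0 <= d x y) /\
  (forall x y, d x y = 0 <-> x = y) /\
  (forall x y, d x y = d y x) /\
  (forall x y z, d x z <= d x y + d y z).

(* n(r, A) computed in the subspace E (restricted metric): the least number
   of open balls of E (centres in E) of radius r covering A; +oo if none. *)
Definition covnum (R : realType) (T : Type) (d : T -> T -> R) (E : set T)
    (r : R) (A : set T) : \bar R :=
  ereal_inf [set ((n%:R : R)%:E) | n in
    [set n : nat | exists c : 'I_n -> T, (forall i, E (c i)) /\
        (forall y, A y -> exists i, E y /\ d (c i) y < r)]].

Definition cball (R : realType) (T : Type) (d : T -> T -> R) (E : set T)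
    (z : T) (r : R) : set T := [set y | E y /\ d z y <= r].

(* log n(lam r, cl B_E(z,r)) / log (1/lam), with log(+oo) = +oo *)
Definition tdratio (R : realType) (T : Type) (d : T -> T -> R) (E : set T)
    (z : T) (lam r : R) : \bar R :=
  let N := covnum d E (lam * r) (cball d E z r) in
  if N == +oo%E then +oo%E else ((ln (fine N) / ln (lam^-1))%:E).

Definition liminf0 (R : realType) (f : R -> \bar R) : \bar R :=
  ereal_sup [set ereal_inf [set f t | t in [set t | 0 < t < e]] | e in [set e | 0 < e]].
Definition limsup0 (R : realType) (f : R -> \bar R) : \bar R :=
  ereal_inf [set ereal_sup [set f t | t in [set t | 0 < t < e]] | e in [set e | 0 < e]].

Definition lower_td (R : realType) (T : Type) (d : T -> T -> R) (E : set T)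
    (z : T) : \bar R :=
  liminf0 (fun lam => liminf0 (fun r => tdratio d E z lam r)).
Definition upper_td (R : realType) (T : Type) (d : T -> T -> R) (E : set T)
    (z : T) : \bar R :=
  limsup0 (fun lam => limsup0 (fun r => tdratio d E z lam r)).

Definition dprod (R : realType) (T1 T2 : Type) (d1 : T1 -> T1 -> R)
    (d2 : T2 -> T2 -> R) (p q : T1 * T2) : R :=
  Num.max (d1 p.1 q.1) (d2 p.2 q.2).

(* Write N(lam, r) = n(lam r, cl B(z, r)).  Both tangential dimensions are
   determined by which eventual bounds N(lam, r) <= lam^-a (resp. >=) hold for
   small lam and then small r, and these bounds are insensitive to replacing
   lam by k lam for a constant k > 0, because log (k lam) / log lam -> 1.
   Each part thus reduces to an inequality between covering numbers, up to such
   a rescaling: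
   (i) moving the centres of a cover into a subspace at most doubles the radius,
       and near x the balls of Y and of X agree when Y contains a ball around x;
   (ii) covers of X1 and X2 together cover X1 u X2, so N <= N1 + N2 <= 2 lam^-a;
   (iii) for the max metric, products of covers cover products of balls, and
       products of 2 rho-separated families, which exist greedily with as many
       points as the 2 rho-covering number, are 2 rho-separated; hence
       N_X(2 lam) N_Y(2 lam) <= N_XxY(lam) <= N_X(lam) N_Y(lam). *)

From HB Require Import structures.
From mathcomp Require Import all_boot all_order all_algebra.
From mathcomp Require Import all_classical all_reals all_analysis.
From mathcomp Require Import lra.
Import Order.TTheory GRing.Theory Num.Theory.
Local Open Scope classical_set_scope.
Local Open Scope ring_scope.

Section Near0.
Context {R : realType}.
Implicit Types (P : R -> Prop).

Lemma near0P P :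
  (\forall t \near 0^'+, P t) <-> exists2 e : R, 0 < e & forall t, 0 < t < e -> P t.
Proof.
rewrite near_withinE; split.
  case/nbhs_ballP => e /= e0 H; exists e => // t /andP[t0 te].
  have /H : ball_ Num.norm 0 e t by rewrite /= sub0r normrN gtr0_norm.
  exact.
case=> e e0 H; apply/nbhs_ballP; exists e => //= t.
rewrite /ball /= sub0r normrN => te t0; apply: H.
by rewrite t0 -(gtr0_norm t0).
Qed.

Lemma near0_scale (k : R) P : 0 < k ->
  (\forall t \near 0^'+, P t) -> \forall t \near 0^'+, P (k * t).
Proof.
move=> k0 /near0P[e e0 H]; apply/near0P; exists (e / k) => [|t /andP[t0 te]].
  exact: divr_gt0.
by apply: H; rewrite mulr_gt0 //= mulrC -ltr_pdivlMr.
Qed.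

Lemma near0_powR_gap (c a b : R) : a < b ->
  \forall lam \near 0^'+, c * lam^-1 `^ a <= lam^-1 `^ b.
Proof.
move=> ab; apply/near0P; exists (expR (- (ln (Num.max c 1) / (b - a)))).
  exact: expR_gt0.
move=> lam /andP[lam0 lam_small].
have lamV0 : 0 < lam^-1 by rewrite invr_gt0.
rewrite -[b](subrK a) powRD ?(gt_eqF lamV0) ?implybT //.
apply: ler_wpM2r; first exact: powR_ge0.
apply: le_trans (_ : c <= Num.max c 1) _; first by rewrite le_max lexx.
rewrite /powR gt_eqF // -[Num.max c 1]lnK ?posrE ?lt_max ?ltr01 ?orbT // ler_expR.
rewrite -ler_pdivrMl ?subr_gt0 // mulrC.
rewrite -ler_expR lnK ?posrE // -[expR _]invrK -expRN lef_pV2 ?posrE ?expR_gt0 //.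
exact: ltW.
Qed.

Lemma near0_lt1 : \forall lam \near (0 : R)^'+, 0 < lam < 1.
Proof.
near=> lam; apply/andP; split; near: lam; [exact: nbhs_right_gt | exact: nbhs_right_lt].
Unshelve. all: by end_near.
Qed.
End Near0.

Arguments near0_scale {R k P}.

Local Open Scope ereal_scope.

Section ExtendedReals.
Context {R : realType}.
Implicit Types (x y : \bar R).

Lemma lte_real_between {x y : \bar R} : x < y -> exists2 a : R, x < a%:E & a%:E < y.
Proof.
case: x => [u| |]; case: y => [v| |] //=; rewrite ?lte_fin => uv.
- by exists ((u + v) / 2)%R; rewrite lte_fin; lra.
- by exists (u + 1)%R; rewrite ?ltry ?lte_fin //; lra.
- by exists (v - 1)%R; rewrite ?ltNyr ?lte_fin //; lra.
- by exists 0%R; rewrite ?ltry ?ltNyr.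
Qed.

Lemma lee_approx_ub x y :
  (forall a' a : R, y < a'%:E -> (a' < a)%R -> x <= a%:E) -> x <= y.
Proof.
move=> H; rewrite leNgt; apply/negP => /lte_real_between[a ya ax].
have [a' ya' a'a] := lte_real_between ya.
by have := H a' a ya'; rewrite -lte_fin leNgt ax => /(_ a'a).
Qed.

Lemma lee_approx_lb x y :
  (forall a a' : R, (a < a')%R -> a'%:E < x -> a%:E <= y) -> x <= y.
Proof.
move=> H; rewrite leNgt; apply/negP => /lte_real_between[a ya ax].
have [a' aa' a'x] := lte_real_between ax.
by have := H a a'; rewrite -lte_fin leNgt ya => /(_ aa' a'x).
Qed.

Lemma adde_lt_split {x y : \bar R} {a : R} : 0 <= x -> 0 <= y -> x + y < a%:E ->
  exists2 a1 : R, x < a1%:E & y < (a - a1)%:E.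
Proof.
case: x => [u| |]; case: y => [v| |] //= u0 v0; rewrite ?lte_fin => uva.
by exists (u + (a - u - v) / 2)%R; rewrite lte_fin; lra.
Qed.

Lemma lt_adde_split {x y : \bar R} {a : R} : a%:E < x + y ->
  exists2 a1 : R, a1%:E < x & (a - a1)%:E < y.
Proof.
case: x => [u| |]; case: y => [v| |] //=; rewrite ?lte_fin => auv.
- by exists (u - (u + v - a) / 2)%R; rewrite lte_fin; lra.
- by exists (u - 1)%R; rewrite ?ltry ?lte_fin //; lra.
- by exists (a - v + 1)%R; rewrite ?ltry ?lte_fin //; lra.
- by exists 0%R; rewrite !ltry.
Qed.

Definition is_enat x : Prop := x = +oo \/ exists n : nat, x = n%:R%:E.

Lemma eq_infty_nat x : (forall k : nat, k%:R%:E <= x) -> x = +oo.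
Proof.
move=> H; apply: eq_infty => r; apply: le_trans (H (Num.Def.archi_bound `|r|)).
rewrite lee_fin; apply: le_trans (ler_norm r) _.
exact/ltW/archi_boundP.
Qed.

Lemma mule_le_enat x y z : is_enat x -> is_enat y ->
  (forall k1 k2 : nat, k1%:R%:E <= x -> k2%:R%:E <= y -> (k1 * k2)%:R%:E <= z) ->
  x * y <= z.
Proof.
move=> ex ey H.
have z_ge0 : 0 <= z.
  by have := H 0%N 0%N; rewrite mul0n; apply;
    [case: ex => [->|[? ->]] | case: ey => [->|[? ->]]]; rewrite ?leey ?lee_fin.
have z_oo : ((x = +oo) /\ 1%:R%:E <= y) \/ (1%:R%:E <= x /\ y = +oo) -> z = +oo.
  case=> [[xoo y1] | [x1 yoo]]; apply: eq_infty_nat => k.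
    by rewrite -[k]muln1; apply: H; rewrite ?xoo ?leey.
  by rewrite -[k]mul1n; apply: H; rewrite ?yoo ?leey.
case: ex => [xoo | [[|n] xn]]; case: ey => [yoo | [[|m] ym]];
  rewrite ?xn ?ym ?mul0e ?mule0 //.
- by rewrite z_oo ?leey //; left; rewrite yoo leey.
- by rewrite z_oo ?leey //; left; rewrite ym lee_fin ler1n.
- by rewrite z_oo ?leey //; right; rewrite xn lee_fin ler1n.
- by rewrite -EFinM -natrM; apply: H; rewrite ?xn ?ym.
Qed.
End ExtendedReals.

Section LimitsAtZero.
Context {R : realType}.
Implicit Types (f : R -> \bar R) (a : \bar R).

Lemma limsup0_lt f a : limsup0 f < a -> \forall t \near 0^'+, f t < a.
Proof.
case/ereal_inf_lt => _ [e /= e0 <-] supa.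
near=> t; apply: le_lt_trans supa; apply: ereal_sup_ubound; exists t => //=.
apply/andP; split; near: t; [exact: nbhs_right_gt | exact: nbhs_right_lt].
Unshelve. all: by end_near.
Qed.

Lemma limsup0_le f a : (\forall t \near 0^'+, f t <= a) -> limsup0 f <= a.
Proof.
case/near0P => e e0 fa; apply: ge_ereal_inf; exists (ereal_sup (f @` [set t | (0 < t < e)%R])).
  by exists e.
by apply/ereal_supP => _ [t /= te <-]; apply: fa.
Qed.

Lemma liminf0_gt f a : a < liminf0 f -> \forall t \near 0^'+, a < f t.
Proof.
case/ereal_sup_gt => _ [e /= e0 <-] ainf.
near=> t; apply: lt_le_trans ainf _; apply: ereal_inf_lbound; exists t => //=.
apply/andP; split; near: t; [exact: nbhs_right_gt | exact: nbhs_right_lt].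
Unshelve. all: by end_near.
Qed.

Lemma liminf0_ge f a : (\forall t \near 0^'+, a <= f t) -> a <= liminf0 f.
Proof.
case/near0P => e e0 fa; apply: le_ereal_sup_tmp; exists (ereal_inf (f @` [set t | (0 < t < e)%R])).
  by exists e.
by apply/ereal_infP => _ [t /= te <-]; apply: fa.
Qed.

End LimitsAtZero.

Section Dimensions.
Context {R : realType}.
Implicit Types (N M : R -> R -> \bar R).

Definition log_ratio (n : \bar R) (lam : R) : \bar R :=
  if n == +oo then +oo else (ln (fine n) / ln lam^-1)%:E.

Definition lower_dim N : \bar R :=
  liminf0 (fun lam => liminf0 (fun r => log_ratio (N lam r) lam)).
Definition upper_dim N : \bar R :=
  limsup0 (fun lam => limsup0 (fun r => log_ratio (N lam r) lam)).

(* Holds for covering numbers of balls centred in the space; it keeps [ln] in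
   [log_ratio] away from its junk values on [(-oo, 0]]. *)
Definition ge1_near0 N := \forall lam \near 0^'+, \forall r \near 0^'+, 1 <= N lam r.
Definition pow_ub N (a : R) :=
  \forall lam \near 0^'+, \forall r \near 0^'+, N lam r <= (lam^-1 `^ a)%:E.
Definition pow_lb N (a : R) :=
  \forall lam \near 0^'+, \forall r \near 0^'+, (lam^-1 `^ a)%:E <= N lam r.

Lemma log_ratio_le n (lam a : R) : (0 < lam < 1)%R -> 1 <= n ->
  (log_ratio n lam <= a%:E) = (n <= (lam^-1 `^ a)%:E).
Proof.
case/andP=> lam0 lam1; have lnV0 : (0 < ln lam^-1)%R by rewrite ln_gt0 // invf_gt1.
case: n => [v| |] //; rewrite lee_fin => v1; rewrite /log_ratio /= lee_fin.
rewrite ler_pdivrMr // /powR gt_eqF ?invr_gt0 //.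
by rewrite -ler_expR lnK // posrE (lt_le_trans ltr01).
Qed.

Lemma log_ratio_ge n (lam a : R) : (0 < lam < 1)%R -> 1 <= n ->
  (a%:E <= log_ratio n lam) = ((lam^-1 `^ a)%:E <= n).
Proof.
case/andP=> lam0 lam1; have lnV0 : (0 < ln lam^-1)%R by rewrite ln_gt0 // invf_gt1.
case: n => [v| |] //; last by rewrite !leey.
rewrite lee_fin => v1; rewrite /log_ratio /= lee_fin.
rewrite ler_pdivlMr // /powR gt_eqF ?invr_gt0 //.
by rewrite -ler_expR lnK // posrE (lt_le_trans ltr01).
Qed.

Section OneCountingFunction.
Context {N : R -> R -> \bar R}.
Hypothesis N_ge1 : ge1_near0 N.

Lemma upper_dim_lt (a : R) : upper_dim N < a%:E -> pow_ub N a.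
Proof.
move/limsup0_lt; move: N_ge1 (near0_lt1 (R := R)); rewrite /pow_ub.
apply: filterS3 => lam N1 lam01 /limsup0_lt; move: N1.
by apply: filterS2 => r N1 /ltW; rewrite log_ratio_le.
Qed.

Lemma pow_ub_le (a : R) : pow_ub N a -> upper_dim N <= a%:E.
Proof.
move=> Na; apply: limsup0_le; move: Na N_ge1 (near0_lt1 (R := R)).
apply: filterS3 => lam Na N1 lam01; apply: limsup0_le; move: Na N1.
by apply: filterS2 => r Na N1; rewrite log_ratio_le.
Qed.

Lemma lower_dim_gt (a : R) : a%:E < lower_dim N -> pow_lb N a.
Proof.
move/liminf0_gt; move: N_ge1 (near0_lt1 (R := R)); rewrite /pow_lb.
apply: filterS3 => lam N1 lam01 /liminf0_gt; move: N1.
by apply: filterS2 => r N1 /ltW; rewrite log_ratio_ge.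
Qed.

Lemma pow_lb_ge (a : R) : pow_lb N a -> a%:E <= lower_dim N.
Proof.
move=> Na; apply: liminf0_ge; move: Na N_ge1 (near0_lt1 (R := R)).
apply: filterS3 => lam Na N1 lam01; apply: liminf0_ge; move: Na N1.
by apply: filterS2 => r Na N1; rewrite log_ratio_ge.
Qed.

Lemma upper_dim_ge0 : 0 <= upper_dim N.
Proof.
rewrite leNgt; apply/negP => /lte_real_between[a /upper_dim_lt Na].
rewrite lte_fin => a_lt0.
have : \forall lam \near (0 : R)^'+, \forall r \near (0 : R)^'+, False.
  move: Na N_ge1 (near0_lt1 (R := R)); rewrite /pow_ub.
  apply: filterS3 => lam Na N1 /andP[lam0 lam1].
  move: Na N1; apply: filterS2 => r Na N1; have := le_trans N1 Na.
  rewrite lee_fin /powR gt_eqF ?invr_gt0 // leNgt expR_lt1 nmulr_rlt0 //.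
  by rewrite ln_gt0 // invf_gt1.
by case/filter_ex => lam /filter_ex[r].
Qed.

End OneCountingFunction.

(* Rescaling lam by k multiplies the bound lam^-a by k^a, which is absorbed by
   raising the exponent slightly ([near0_powR_gap]). *)
Lemma upper_dim_le_scaled {N M} (k : R) : (0 < k)%R -> ge1_near0 N -> ge1_near0 M ->
  (\forall mu \near 0^'+, \forall r \near 0^'+, N (k * mu)%R r <= M mu r) ->
  upper_dim N <= upper_dim M.
Proof.
move=> k0 N1 M1 NM; apply: lee_approx_ub => a' a /(upper_dim_lt M1) Ma' a'a.
apply: (pow_ub_le N1); have kV0 : (0 < k^-1)%R by rewrite invr_gt0.
near=> lam.
have lam0 : (0 < lam)%R by near: lam; exact: nbhs_right_gt.
have gap : (k `^ a' * lam^-1 `^ a' <= lam^-1 `^ a)%R by near: lam; exact: near0_powR_gap.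
have NMl : \forall r \near 0^'+, N (k * (k^-1 * lam))%R r <= M (k^-1 * lam)%R r.
  by near: lam; exact: (near0_scale kV0 NM).
have Ml : \forall r \near 0^'+, M (k^-1 * lam)%R r <= ((k^-1 * lam)^-1 `^ a')%:E.
  by near: lam; exact: (near0_scale kV0 Ma').
move: NMl Ml; apply: filterS2 => r; rewrite mulrA mulfV ?gt_eqF // mul1r => NMr Mr.
apply: le_trans NMr (le_trans Mr _); rewrite lee_fin invfM invrK.
by rewrite powRM ?invr_ge0 ?(ltW k0) ?(ltW lam0).
Unshelve. all: by end_near.
Qed.

Lemma lower_dim_le_scaled {N M} (k : R) : (0 < k)%R -> ge1_near0 N -> ge1_near0 M ->
  (\forall mu \near 0^'+, \forall r \near 0^'+, N (k * mu)%R r <= M mu r) ->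
  lower_dim N <= lower_dim M.
Proof.
move=> k0 N1 M1 NM; apply: lee_approx_lb => a a' aa' /(lower_dim_gt N1) Na'.
apply: (pow_lb_ge M1).
near=> mu.
have mu0 : (0 < mu)%R by near: mu; exact: nbhs_right_gt.
have gap : ((k^-1 `^ a')^-1 * mu^-1 `^ a <= mu^-1 `^ a')%R.
  by near: mu; exact: near0_powR_gap.
have NMm : \forall r \near 0^'+, N (k * mu)%R r <= M mu r by near: mu; exact: NM.
have Nm : \forall r \near 0^'+, (((k * mu)^-1 `^ a')%:E <= N (k * mu)%R r).
  by near: mu; exact: (near0_scale k0 Na').
move: NMm Nm; apply: filterS2 => r NMr Nr.
apply: le_trans (le_trans Nr NMr); rewrite lee_fin invfM.
rewrite powRM ?invr_ge0 ?(ltW k0) ?(ltW mu0) //.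
by rewrite -ler_pdivrMl ?powR_gt0 ?invr_gt0.
Unshelve. all: by end_near.
Qed.

Lemma lower_dim_scale {N} {k : R} : (0 < k)%R -> ge1_near0 N ->
  lower_dim (fun mu r => N (k * mu)%R r) = lower_dim N.
Proof.
move=> k0 N1; have Nk1 : ge1_near0 (fun mu r => N (k * mu)%R r) := near0_scale k0 N1.
apply/le_anti/andP; split.
  apply: (lower_dim_le_scaled k^-1) Nk1 N1 _; first by rewrite invr_gt0.
  by apply: nearW => mu; apply: nearW => r; rewrite mulrA mulfV ?gt_eqF // mul1r.
by apply: (lower_dim_le_scaled k) k0 N1 Nk1 _; apply: nearW => mu; apply: nearW.
Qed.

Lemma upper_dim_le_maxe {N N1 N2} : ge1_near0 N -> ge1_near0 N1 -> ge1_near0 N2 ->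
  (\forall lam \near 0^'+, \forall r \near 0^'+, N lam r <= N1 lam r + N2 lam r) ->
  upper_dim N <= maxe (upper_dim N1) (upper_dim N2).
Proof.
move=> HN H1 H2 NN12; apply: lee_approx_ub => a' a.
rewrite gt_max => /andP[/(upper_dim_lt H1) N1a' /(upper_dim_lt H2) N2a'] a'a.
apply: (pow_ub_le HN); near=> lam.
have gap : (2 * lam^-1 `^ a' <= lam^-1 `^ a)%R by near: lam; exact: near0_powR_gap.
have hN : \forall r \near 0^'+, N lam r <= N1 lam r + N2 lam r by near: lam.
have h1 : \forall r \near 0^'+, N1 lam r <= (lam^-1 `^ a')%:E by near: lam.
have h2 : \forall r \near 0^'+, N2 lam r <= (lam^-1 `^ a')%:E by near: lam.
move: hN h1 h2; apply: filterS3 => r hN h1 h2.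
apply: le_trans hN (le_trans (leeD h1 h2) _).
by rewrite -EFinD lee_fin -mulr2n -mulr_natl.
Unshelve. all: by end_near.
Qed.

Lemma upper_dim_le_add {N N1 N2} : ge1_near0 N -> ge1_near0 N1 -> ge1_near0 N2 ->
  (\forall lam \near 0^'+, \forall r \near 0^'+, N lam r <= N1 lam r * N2 lam r) ->
  upper_dim N <= upper_dim N1 + upper_dim N2.
Proof.
move=> HN H1 H2 NN12; apply: lee_approx_ub => a' a.
move=> /(adde_lt_split (upper_dim_ge0 H1) (upper_dim_ge0 H2))[a1].
move=> /(upper_dim_lt H1) N1a1 /(upper_dim_lt H2) N2a2 a'a.
apply: le_trans (_ : _ <= a'%:E) _; last by rewrite lee_fin ltW.
apply: (pow_ub_le HN); near=> lam.
have lam0 : (0 < lam)%R by near: lam; exact: nbhs_right_gt.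
have hN : \forall r \near 0^'+, N lam r <= N1 lam r * N2 lam r by near: lam.
have h1 : \forall r \near 0^'+, N1 lam r <= (lam^-1 `^ a1)%:E by near: lam.
have h2 : \forall r \near 0^'+, N2 lam r <= (lam^-1 `^ (a' - a1))%:E by near: lam.
have g1 : \forall r \near 0^'+, 1 <= N1 lam r by near: lam.
have g2 : \forall r \near 0^'+, 1 <= N2 lam r by near: lam.
near=> r.
have ge0 (x : \bar R) : 1 <= x -> 0 <= x by apply: le_trans.
apply: le_trans (_ : N lam r <= N1 lam r * N2 lam r) _; first by near: r.
rewrite -[a'](subrKC a1) powRD ?EFinM; last by rewrite invr_eq0 (gt_eqF lam0) implybT.
by apply: lee_pmul; [apply: ge0 | apply: ge0 | |]; near: r.
Unshelve. all: by end_near.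
Qed.

Lemma lower_dim_add_le {N N1 N2} : ge1_near0 N -> ge1_near0 N1 -> ge1_near0 N2 ->
  (\forall lam \near 0^'+, \forall r \near 0^'+, N1 lam r * N2 lam r <= N lam r) ->
  lower_dim N1 + lower_dim N2 <= lower_dim N.
Proof.
move=> HN H1 H2 N12N; apply: lee_approx_lb => a a' aa'.
move=> /lt_adde_split[a1 /(lower_dim_gt H1) N1a1 /(lower_dim_gt H2) N2a2].
apply: le_trans (_ : a'%:E <= _); first by rewrite lee_fin ltW.
apply: (pow_lb_ge HN); near=> lam.
have lam0 : (0 < lam)%R by near: lam; exact: nbhs_right_gt.
have hN : \forall r \near 0^'+, N1 lam r * N2 lam r <= N lam r by near: lam.
have h1 : \forall r \near 0^'+, (lam^-1 `^ a1)%:E <= N1 lam r by near: lam.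
have h2 : \forall r \near 0^'+, (lam^-1 `^ (a' - a1))%:E <= N2 lam r by near: lam.
move: hN h1 h2; apply: filterS3 => r hN h1 h2; apply: le_trans hN.
rewrite -[a'](subrKC a1) powRD ?EFinM; last by rewrite invr_eq0 (gt_eqF lam0) implybT.
by apply: lee_pmul; rewrite ?lee_fin ?powR_ge0.
Unshelve. all: by end_near.
Qed.

End Dimensions.

Local Close Scope ereal_scope.

Section CoveringNumbers.
Context {R : realType} {T : Type} {d : T -> T -> R}.
Implicit Types (E A : set T) (r : R).

Definition is_cover E r A {I : Type} (c : I -> T) : Prop :=
  (forall i, E (c i)) /\ (forall y, A y -> exists i, E y /\ d (c i) y < r).

Lemma covnum_le_card {E r A} {I : finType} {c : I -> T} :
  is_cover E r A c -> (covnum d E r A <= #|I|%:R%:E)%E.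
Proof.
move=> [cE cA]; apply: ereal_inf_lbound; exists #|I| => //.
exists (c \o enum_val); split => [i | y /cA[i [Ey dy]]]; first exact: cE.
by exists (enum_rank i); rewrite /= enum_rankK.
Qed.

Lemma covnum_le {E r A n} {c : 'I_n -> T} :
  is_cover E r A c -> (covnum d E r A <= n%:R%:E)%E.
Proof. by move/covnum_le_card; rewrite card_ord. Qed.

Lemma covnum_ge E r A (b : \bar R) :
  (forall n (c : 'I_n -> T), is_cover E r A c -> (b <= n%:R%:E)%E) ->
  (b <= covnum d E r A)%E.
Proof. by move=> H; apply/ereal_infP => _ [n [c cov] <-]; apply: H cov. Qed.

Lemma covnum_ge0 E r A : (0 <= covnum d E r A)%E.
Proof. by apply: covnum_ge => n c _; rewrite lee_fin. Qed.

Lemma covnum_ge1 E r {A y} : A y -> (1 <= covnum d E r A)%E.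
Proof.
move=> Ay; apply: covnum_ge => n c [_ /(_ y Ay)[i _]].
by rewrite lee_fin ler1n (leq_ltn_trans _ (ltn_ord i)).
Qed.

Lemma covnum_attained {E r A} : covnum d E r A != +oo%E ->
  exists n (c : 'I_n -> T), is_cover E r A c /\ covnum d E r A = n%:R%:E.
Proof.
move=> fin.
have ex_cover : exists n, `[< exists c : 'I_n -> T, is_cover E r A c >].
  apply: contrapT => none; move: fin; apply/negP; rewrite negbK.
  rewrite /covnum (_ : [set _ | n in _] = set0) ?ereal_inf0 //.
  by apply/seteqP; split => // y [n cov _]; apply: none; exists n; apply/asboolP.
case: (ex_minnP ex_cover) => n /asboolP[c cov] nmin.
exists n, c; split => //; apply/le_anti/andP; split; first exact: covnum_le cov.
apply: covnum_ge => m c' cov'; rewrite lee_fin ler_nat.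
by apply: nmin; apply/asboolP; exists c'.
Qed.

Lemma covnum_enat E r A : is_enat (covnum d E r A).
Proof.
have [->|/covnum_attained[n [_ [_ ->]]]] := eqVneq (covnum d E r A) +oo%E.
  by left.
by right; exists n.
Qed.

Lemma covnumS {E r A A'} : A `<=` A' -> (covnum d E r A <= covnum d E r A')%E.
Proof.
move=> AA'; apply: covnum_ge => n c [cE cA']; apply: (covnum_le (c := c)).
by split => // y /AA' /cA'.
Qed.

Lemma covnum_le_subspace {E E' r A} : E `<=` E' -> (covnum d E' r A <= covnum d E r A)%E.
Proof.
move=> EE'; apply: covnum_ge => n c [cE cA]; apply: (covnum_le (c := c)).
by split => [i | y /cA[i [Ey dy]]]; [apply: EE' | exists i; split => //; apply: EE'].
Qed.

Lemma covnumU {E1 E2 r A1 A2} :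
  (covnum d (E1 `|` E2) r (A1 `|` A2) <= covnum d E1 r A1 + covnum d E2 r A2)%E.
Proof.
have [->|/covnum_attained[n1 [c1 [[c1E c1A] ->]]]] := eqVneq (covnum d E1 r A1) +oo%E.
  by rewrite addye ?leey // -ltNye (lt_le_trans _ (covnum_ge0 _ _ _)).
have [->|/covnum_attained[n2 [c2 [[c2E c2A] ->]]]] := eqVneq (covnum d E2 r A2) +oo%E.
  by rewrite addey ?leey.
pose c (i : 'I_n1 + 'I_n2) := match i with inl i => c1 i | inr i => c2 i end.
have cov : is_cover (E1 `|` E2) r (A1 `|` A2) c.
  split => [[i|i] | y [/c1A[i [Ey dy]] | /c2A[i [Ey dy]]]].
  - by left; apply: c1E.
  - by right; apply: c2E.
  - by exists (inl i); split => //; left.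
  - by exists (inr i); split => //; right.
by have := covnum_le_card cov; rewrite card_sum !card_ord natrD EFinD.
Qed.

Lemma covnum_recentre {E1 E2 r A x0} : is_metric d -> E1 x0 -> A `<=` E1 ->
  (covnum d E1 (r + r) A <= covnum d E2 r A)%E.
Proof.
move=> [_ [_ [dC dtri]]] E1x0 AE1; apply: covnum_ge => n c [_ cA].
(* Replace each centre by a point of A in its ball, when there is one. *)
have recentred i : exists c'_i,
    E1 c'_i /\ forall y, A y -> d (c i) y < r -> d c'_i y < r + r.
  have [[y0 [Ay0 dy0]] | none] := pselect (exists y, A y /\ d (c i) y < r).
    exists y0; split => [|y _ dy]; first exact: AE1.
    by apply: le_lt_trans (dtri _ (c i) _) _; rewrite dC ltrD.
  by exists x0; split => // y Ay dy; exfalso; apply: none; exists y.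
have [c' c'P] := choice recentred.
apply: (covnum_le (c := c')); split => [i | y Ay]; first by case: (c'P i).
have [i [_ dy]] := cA y Ay; exists i; split; first exact: AE1.
by case: (c'P i) => _; apply.
Qed.

Lemma packing_le_cover {E r A} {I J : finType} {s : I -> T} {c : J -> T} :
  is_metric d -> (forall i, A (s i)) -> (forall i j, i != j -> r + r <= d (s i) (s j)) ->
  is_cover E r A c -> (#|I| <= #|J|)%N.
Proof.
move=> [_ [_ [dC dtri]]] sA sep [_ cA].
have covered i : exists j, d (c j) (s i) < r by have [j [_ dj]] := cA _ (sA i); exists j.
have [f fP] := choice covered.
apply: (@leq_card _ _ f) => i j fij.
apply: (contraTeq (b := d (s i) (s j) < r + r)); first by move/sep; rewrite leNgt.
apply: le_lt_trans (dtri _ (c (f i)) _) _.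
by rewrite dC ltrD // fij.
Qed.

Lemma packing_exists {E r A k} : is_metric d -> A `<=` E ->
  (k%:R%:E <= covnum d E r A)%E ->
  exists s : 'I_k -> T, (forall i, A (s i)) /\ (forall i j, i != j -> r <= d (s i) (s j)).
Proof.
move=> [_ [_ [dC _]]] AE; elim: k => [_ | k IH kN].
  by exists (ffun0 (card_ord 0)); split => -[].
have [s [sA sep]] : exists s : 'I_k -> T,
    (forall i, A (s i)) /\ (forall i j, i != j -> r <= d (s i) (s j)).
  by apply: IH; apply: le_trans kN; rewrite lee_fin ler_nat.
(* Greedy step: a point of A far from the family extends it; if there is none,
   the family is a cover with k < covnum balls. *)
have [[y [Ay far]] | no_far] := pselect (exists y, A y /\ forall i, r <= d (s i) y).
  exists (fun i => if unlift ord_max i is Some j then s j else y); split.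
    by move=> i; case: unliftP => [j _ | _].
  move=> i j; case: (unliftP ord_max i) => [i' -> | ->];
    case: (unliftP ord_max j) => [j' -> | ->]; rewrite ?liftK ?unlift_none ?eqxx //.
  - by move=> ij; apply: sep; apply: contraNneq ij => ->.
  - by rewrite dC.
have cov : is_cover E r A s.
  split => [i | y' Ay']; first exact/AE/sA.
  apply: contrapT => none; apply: no_far; exists y'; split => // i.
  by rewrite leNgt; apply/negP => dy; apply: none; exists i; split => //; apply: AE.
by have := le_trans kN (covnum_le cov); rewrite lee_fin ler_nat ltnn.
Qed.

End CoveringNumbers.

Arguments is_cover {R T} d E r A {I} c.

Section ProductMetric.
Context {R : realType} {T1 T2 : Type} (d1 : T1 -> T1 -> R) (d2 : T2 -> T2 -> R).

Lemma is_metric_dprod : is_metric d1 -> is_metric d2 -> is_metric (dprod d1 d2).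
Proof.
move=> [d1_ge0 [d1_eq0 [d1C d1tri]]] [d2_ge0 [d2_eq0 [d2C d2tri]]].
split; first by move=> p q; rewrite /dprod le_max d1_ge0.
split.
  move=> [x1 x2] [y1 y2]; rewrite /dprod /=; split => [/eqP | [-> ->]].
    rewrite eq_le ge_max => /andP[/andP[h1 h2] _].
    have e1 : d1 x1 y1 = 0 by apply/le_anti; rewrite h1 d1_ge0.
    have e2 : d2 x2 y2 = 0 by apply/le_anti; rewrite h2 d2_ge0.
    by rewrite (proj1 (d1_eq0 _ _) e1) (proj1 (d2_eq0 _ _) e2).
  by rewrite (proj2 (d1_eq0 _ _) erefl) (proj2 (d2_eq0 _ _) erefl) maxxx.
split; first by move=> p q; rewrite /dprod d1C d2C.
move=> p q s; rewrite /dprod ge_max; apply/andP; split.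
  by apply: le_trans (d1tri _ q.1 _) _; apply: lerD; rewrite le_max lexx ?orbT.
by apply: le_trans (d2tri _ q.2 _) _; apply: lerD; rewrite le_max lexx ?orbT.
Qed.

Lemma cball_dprod E1 E2 x y r :
  cball (dprod d1 d2) (E1 `*` E2) (x, y) r = cball d1 E1 x r `*` cball d2 E2 y r.
Proof.
apply/seteqP; split => -[a b]; rewrite /cball /dprod /= ge_max.
  by move=> [[E1a E2b] /andP[da db]].
by move=> [[E1a da] [E2b db]]; split; rewrite ?da.
Qed.

Lemma covnum_dprod_le E1 E2 r A1 A2 :
  (covnum (dprod d1 d2) (E1 `*` E2) r (A1 `*` A2) <=
     covnum d1 E1 r A1 * covnum d2 E2 r A2)%E.
Proof.
have [[[y1 y2] [A1y A2y]] | empty] := pselect (exists p, (A1 `*` A2) p); last first.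
  apply: (le_trans _ (mule_ge0 (covnum_ge0 _ _ _) (covnum_ge0 _ _ _))).
  have cov : is_cover (dprod d1 d2) (E1 `*` E2) r (A1 `*` A2) (of_void (T1 * T2)).
    by split => [[] | p A12p]; exfalso; apply: empty; exists p.
  by have := covnum_le_card cov; rewrite card_void.
have c1_ge1 := covnum_ge1 (d := d1) E1 r A1y.
have c2_ge1 := covnum_ge1 (d := d2) E2 r A2y.
have [c1oo | c1fin] := eqVneq (covnum d1 E1 r A1) +oo%E.
  by rewrite c1oo gt0_mulye ?leey // (lt_le_trans _ c2_ge1).
have [c2oo | c2fin] := eqVneq (covnum d2 E2 r A2) +oo%E.
  by rewrite c2oo gt0_muley ?leey // (lt_le_trans _ c1_ge1).
have [n1 [c1 [[c1E c1A] ->]]] := covnum_attained c1fin.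
have [n2 [c2 [[c2E c2A] ->]]] := covnum_attained c2fin.
have cov : is_cover (dprod d1 d2) (E1 `*` E2) r (A1 `*` A2)
    (fun ij : 'I_n1 * 'I_n2 => (c1 ij.1, c2 ij.2)).
  split => [ij | [a b] [/c1A[i [E1a dai]] /c2A[j [E2b dbj]]]].
    by split; [apply: c1E | apply: c2E].
  by exists (i, j); split => //; rewrite /dprod gt_max dai dbj.
by have := covnum_le_card cov; rewrite card_prod !card_ord natrM EFinM.
Qed.

(* A product of 2r-separated families is 2r-separated for the max metric, so
   every r-cover of the product needs a distinct ball for each of its points. *)
Lemma covnum_dprod_ge E1 E2 r A1 A2 : is_metric d1 -> is_metric d2 ->
  A1 `<=` E1 -> A2 `<=` E2 ->
  (covnum d1 E1 (r + r) A1 * covnum d2 E2 (r + r) A2 <=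
     covnum (dprod d1 d2) (E1 `*` E2) r (A1 `*` A2))%E.
Proof.
move=> m1 m2 AE1 AE2; apply: mule_le_enat; [exact: covnum_enat | exact: covnum_enat |].
move=> k1 k2 /(packing_exists m1 AE1)[s1 [s1A sep1]] /(packing_exists m2 AE2)[s2 [s2A sep2]].
apply: covnum_ge => n c cov; rewrite lee_fin ler_nat.
pose s (ij : 'I_k1 * 'I_k2) := (s1 ij.1, s2 ij.2).
have := packing_le_cover (is_metric_dprod m1 m2) (s := s) _ _ cov.
rewrite card_prod !card_ord; apply => [ij | [i1 j1] [i2 j2]].
  by split; [apply: s1A | apply: s2A].
rewrite /dprod /= le_max; have [<- ne | /sep1 -> //] := eqVneq i1 i2.
by rewrite sep2 ?orbT //; apply: contraNneq ne => ->.
Qed.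

End ProductMetric.

Section TangentialDimensions.
Context {R : realType}.

Lemma metric_dxx {T} {d : T -> T -> R} (x : T) : is_metric d -> d x x = 0.
Proof. by case=> _ [/(_ x x)[_ ->]]. Qed.

Definition covfun {T} (d : T -> T -> R) (E : set T) (z : T) : R -> R -> \bar R :=
  fun lam r => covnum d E (lam * r) (cball d E z r).

Lemma lower_tdE T (d : T -> T -> R) E z : lower_td d E z = lower_dim (covfun d E z).
Proof. by []. Qed.

Lemma upper_tdE T (d : T -> T -> R) E z : upper_td d E z = upper_dim (covfun d E z).
Proof. by []. Qed.

Lemma covfun_ge1 {T} {d : T -> T -> R} {E z} : is_metric d -> E z -> ge1_near0 (covfun d E z).
Proof.
move=> md Ez; apply: nearW => lam; near=> r.
have r_ge0 : 0 <= r by near: r; exact: nbhs_right_ge.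
by apply: (covnum_ge1 _ _ (y := z)); split; rewrite ?(metric_dxx z md).
Unshelve. all: by end_near.
Qed.

Lemma covfun_subspace T (d : T -> T -> R) E1 E2 z mu r : is_metric d ->
  E1 `<=` E2 -> E1 z -> (covfun d E1 z (2 * mu) r <= covfun d E2 z mu r)%E.
Proof.
move=> md E12 E1z; rewrite /covfun -mulrA mulr_natl mulr2n.
apply: le_trans (covnum_recentre (E2 := E2) md E1z (fun y => @proj1 _ _)) (covnumS _).
by move=> y [/E12 E2y dy].
Qed.

Lemma covfun_local {T} {d : T -> T -> R} {E z R0 lam r} :
  [set y | d z y < R0] `<=` E -> r < R0 -> (covfun d setT z lam r <= covfun d E z lam r)%E.
Proof.
move=> ballE rR0; apply: le_trans (covnumS _) (covnum_le_subspace _) => // y [_ dy].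
by split => //; apply: ballE; apply: le_lt_trans rR0.
Qed.

Lemma covfunU T (d : T -> T -> R) X1 X2 z lam r :
  (covfun d (X1 `|` X2) z lam r <= covfun d X1 z lam r + covfun d X2 z lam r)%E.
Proof.
apply: le_trans (covnumS _) covnumU.
by move=> y [[X1y|X2y] dy]; [left | right].
Qed.

Lemma covfun_dprod_le T1 T2 (d1 : T1 -> T1 -> R) (d2 : T2 -> T2 -> R) E1 E2 x y lam r :
  (covfun (dprod d1 d2) (E1 `*` E2) (x, y) lam r <=
     covfun d1 E1 x lam r * covfun d2 E2 y lam r)%E.
Proof. by rewrite /covfun cball_dprod; apply: covnum_dprod_le. Qed.

Lemma covfun_dprod_ge T1 T2 (d1 : T1 -> T1 -> R) (d2 : T2 -> T2 -> R) E1 E2 x y mu r :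
  is_metric d1 -> is_metric d2 ->
  (covfun d1 E1 x (2 * mu) r * covfun d2 E2 y (2 * mu) r <=
     covfun (dprod d1 d2) (E1 `*` E2) (x, y) mu r)%E.
Proof.
move=> m1 m2; rewrite /covfun cball_dprod -mulrA mulr_natl mulr2n.
by apply: covnum_dprod_ge => // p [].
Qed.

Section Metric.
Context {T : Type} {d : T -> T -> R}.
Hypothesis md : is_metric d.

Lemma lower_td_subspace E1 E2 z : E1 `<=` E2 -> E1 z ->
  (lower_td d E1 z <= lower_td d E2 z)%E.
Proof.
move=> E12 E1z; rewrite !lower_tdE.
apply: (lower_dim_le_scaled 2 _ (covfun_ge1 md E1z) (covfun_ge1 md (E12 _ E1z))) => //.
by apply: nearW => mu; apply: nearW => r; apply: covfun_subspace.
Qed.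

Lemma upper_td_subspace E1 E2 z : E1 `<=` E2 -> E1 z ->
  (upper_td d E1 z <= upper_td d E2 z)%E.
Proof.
move=> E12 E1z; rewrite !upper_tdE.
apply: (upper_dim_le_scaled 2 _ (covfun_ge1 md E1z) (covfun_ge1 md (E12 _ E1z))) => //.
by apply: nearW => mu; apply: nearW => r; apply: covfun_subspace.
Qed.

Lemma lower_td_local E z R0 : 0 < R0 -> [set y | d z y < R0] `<=` E ->
  lower_td d E z = lower_td d setT z.
Proof.
move=> R0_gt0 ballE; have Ez : E z.
  by apply: ballE; rewrite /= (metric_dxx z md).
apply/le_anti/andP; split; first exact: lower_td_subspace.
rewrite !lower_tdE.
apply: (lower_dim_le_scaled 1 _ (covfun_ge1 md I) (covfun_ge1 md Ez)); first exact: ltr01.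
apply: nearW => mu; near=> r; rewrite mul1r; apply: (covfun_local ballE).
by near: r; exact: nbhs_right_lt.
Unshelve. all: by end_near.
Qed.

Lemma upper_td_local E z R0 : 0 < R0 -> [set y | d z y < R0] `<=` E ->
  upper_td d E z = upper_td d setT z.
Proof.
move=> R0_gt0 ballE; have Ez : E z.
  by apply: ballE; rewrite /= (metric_dxx z md).
apply/le_anti/andP; split; first exact: upper_td_subspace.
rewrite !upper_tdE.
apply: (upper_dim_le_scaled 1 _ (covfun_ge1 md I) (covfun_ge1 md Ez)); first exact: ltr01.
apply: nearW => mu; near=> r; rewrite mul1r; apply: (covfun_local ballE).
by near: r; exact: nbhs_right_lt.
Unshelve. all: by end_near.
Qed.

Lemma upper_td_setU X1 X2 z : X1 z -> X2 z ->
  upper_td d (X1 `|` X2) z = maxe (upper_td d X1 z) (upper_td d X2 z).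
Proof.
move=> X1z X2z; apply/le_anti/andP; split; last first.
  by rewrite ge_max; apply/andP; split; apply: upper_td_subspace.
rewrite !upper_tdE; apply: upper_dim_le_maxe.
- exact: covfun_ge1 md (or_introl X1z).
- exact: covfun_ge1 md X1z.
- exact: covfun_ge1 md X2z.
- by apply: nearW => lam; apply: nearW => r; apply: covfunU.
Qed.

End Metric.

Lemma lower_td_dprod T1 T2 (d1 : T1 -> T1 -> R) (d2 : T2 -> T2 -> R) E1 E2 x y :
  is_metric d1 -> is_metric d2 -> E1 x -> E2 y ->
  (lower_td d1 E1 x + lower_td d2 E2 y <= lower_td (dprod d1 d2) (E1 `*` E2) (x, y))%E.
Proof.
move=> m1 m2 E1x E2y; rewrite !lower_tdE.
have two_gt0 : 0 < 2 :> R by [].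
rewrite -(lower_dim_scale two_gt0 (covfun_ge1 m1 E1x)).
rewrite -(lower_dim_scale two_gt0 (covfun_ge1 m2 E2y)).
apply: lower_dim_add_le.
- by apply: covfun_ge1; [apply: is_metric_dprod | split].
- exact: near0_scale two_gt0 (covfun_ge1 m1 E1x).
- exact: near0_scale two_gt0 (covfun_ge1 m2 E2y).
- by apply: nearW => mu; apply: nearW => r; apply: covfun_dprod_ge.
Qed.

Lemma upper_td_dprod T1 T2 (d1 : T1 -> T1 -> R) (d2 : T2 -> T2 -> R) E1 E2 x y :
  is_metric d1 -> is_metric d2 -> E1 x -> E2 y ->
  (upper_td (dprod d1 d2) (E1 `*` E2) (x, y) <= upper_td d1 E1 x + upper_td d2 E2 y)%E.
Proof.
move=> m1 m2 E1x E2y; rewrite !upper_tdE; apply: upper_dim_le_add.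
- by apply: covfun_ge1; [apply: is_metric_dprod | split].
- exact: covfun_ge1 m1 E1x.
- exact: covfun_ge1 m2 E2y.
- by apply: nearW => lam; apply: nearW => r; apply: covfun_dprod_le.
Qed.

End TangentialDimensions.

Theorem proposition3p6 (R : realType) :
  (* (i) *)
  (forall (T : Type) (d : T -> T -> R), is_metric d ->
   forall (Y : set T) (x : T), Y x ->
     (lower_td d Y x <= lower_td d setT x)%E /\
     (upper_td d Y x <= upper_td d setT x)%E /\
     ((exists R0 : R, 0 < R0 /\ [set y | d x y < R0] `<=` Y) ->
        lower_td d Y x = lower_td d setT x /\
        upper_td d Y x = upper_td d setT x)) /\
  (* (ii) *)
  (forall (T : Type) (d : T -> T -> R), is_metric d ->
   forall (X1 X2 : set T) (x : T), X1 x -> X2 x ->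
     (maxe (lower_td d X1 x) (lower_td d X2 x) <= lower_td d (X1 `|` X2) x)%E /\
     upper_td d (X1 `|` X2) x = maxe (upper_td d X1 x) (upper_td d X2 x)) /\
  (* (iii) *)
  (forall (T1 T2 : Type) (d1 : T1 -> T1 -> R) (d2 : T2 -> T2 -> R),
   is_metric d1 -> is_metric d2 ->
   forall (x : T1) (y : T2),
     (lower_td d1 setT x + lower_td d2 setT y
        <= lower_td (dprod d1 d2) setT (x, y))%E /\
     (upper_td (dprod d1 d2) setT (x, y)
        <= upper_td d1 setT x + upper_td d2 setT y)%E).
Proof.
split; [|split].
- move=> T d md Y x Yx; split; [|split].
  + exact: lower_td_subspace.
  + exact: upper_td_subspace.
  + case=> R0 [R0_gt0 ballY].
    by split; [apply: lower_td_local R0_gt0 _ | apply: upper_td_local R0_gt0 _].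
- move=> T d md X1 X2 x X1x X2x; split; last exact: upper_td_setU.
  by rewrite ge_max; apply/andP; split; apply: lower_td_subspace.
- move=> T1 T2 d1 d2 m1 m2 x y; rewrite -setXTT.
  by split; [apply: lower_td_dprod | apply: upper_td_dprod].
Qed.
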